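(* Let $a\ge0$, let $f\colon[a,\infty)\to(0,\infty)$ be smooth, let $x$ be $C^1$, and let $(M,g,K)$ be the initial data set $M=[a,\infty)\times\mathbb S^2$, $g=ds^2+f(s)^2\gamma_*$, $K=x'(f(s))ds^2+x(f(s))f(s)\gamma_*$, with energy density satisfying $\mu\ge\tau$ for some $\tau\in\mathbb R$. Then for any $s_o>a$ with $f'(s_o)>0$ there exist $\delta>0$ and a smooth positive function $\widetilde f$ on $[s_o-\delta,\infty)$ with $\widetilde f=f$ on $[s_o,\infty)$ such that the initial data set $\widetilde M=[s_o-\delta,\infty)\times\mathbb S^2$, $\widetilde g=ds^2+\widetilde f^2\gamma_*$, $\widetilde K=x'(\widetilde f)ds^2+x(\widetilde f)\widetilde f\gamma_*$ has energy density $\widetilde\mu\ge\tau$ everywhere and $\widetilde\mu>\tau$ on $[s_o-\delta,s_o)$. Moreover, if in addition $f(s_o)>c>0$ and $f''(s_o)>0$, then $\delta$ can be chosen such that $\widetilde f(s_o-\delta)>c$ and $\widetilde f'(s_o-\delta)<f'(s_o)$.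
   Context: $\gamma_*$ is the standard round metric on $\mathbb S^2$; energy density $\mu=\tfrac12(R(g)+(\operatorname{tr}_gK)^2-|K|^2_g)$. *)

From Stdlib Require Import Reals.
From Coquelicot Require Import Coquelicot.
Open Scope R_scope.

(* Smooth function on R: derivatives of every order exist everywhere.
   A smooth function on a closed half-line [b,oo) is (Seeley) the restriction
   of such a function; only values on the half-line are ever used. *)
Definition smooth (f : R -> R) : Prop :=
  forall (n : nat) (s : R), ex_derive_n f n s.

(* x is C^1 on (0, oo) (the range of the warping function f). *)
Definition C1_pos (x : R -> R) : Prop :=
  forall y, 0 < y -> ex_derive x y /\ continuous (Derive x) y.

(* Rotationally symmetric data on I x S^2:
   g = ds^2 + f(s)^2 gamma_*, K = x'(f(s)) ds^2 + x(f(s)) f(s) gamma_*.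
   The quantities below are the pointwise scalar curvature R(g), tr_g K and
   |K|_g^2 of these data at (s, theta) (independent of theta). *)
Definition scal_warped (f : R -> R) (s : R) : R :=
  2 * (1 - (Derive f s) ^ 2) / (f s) ^ 2 - 4 * Derive_n f 2 s / f s.

Definition trK (f x : R -> R) (s : R) : R :=
  Derive x (f s) + 2 * (x (f s) * f s) / (f s) ^ 2.

Definition normK2 (f x : R -> R) (s : R) : R :=
  (Derive x (f s)) ^ 2 + 2 * ((x (f s) * f s) / (f s) ^ 2) ^ 2.

Definition mu (f x : R -> R) (s : R) : R :=
  / 2 * (scal_warped f s + (trK f x s) ^ 2 - normK2 f x s).

Definition good_extension (f x : R -> R) (tau so delta : R) (ft : R -> R) : Prop :=
  0 < delta /\ smooth ft /\
  (forall s, so - delta <= s -> 0 < ft s) /\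
  (forall s, so <= s -> ft s = f s) /\
  (forall s, so - delta <= s -> tau <= mu ft x s) /\
  (forall s, so - delta <= s < so -> tau < mu ft x s).

From Stdlib Require Import Reals Lra.
From Coquelicot Require Import Coquelicot.
Open Scope R_scope.

(* Extend [f] by [f o psi], where [psi s = s - exp (-1 / (so - s))] for [s < so] and [psi = id]
   on [[so, oo)]; [psi] is smooth since [exp (-1/t)] is flat at [t = 0]. The second fundamental
   form enters [mu] only through the value of the warping function, so the new energy density at
   [s] exceeds [mu (psi s)] by half the change of scalar curvature, which with [t = so - s] and
   [e = exp (-1/t)] is [e / t^4 * (2 f f' (1 - 2 t) - (2 t^2 + e) (f'^2 + 2 f f'')) / f^2] at
   [psi s]. As [f f' > 0] near [so], this is positive for small [t]. For the refinement,
   [(f o psi)' = psi' * f' (psi s)] with [psi' - 1 = O(t^2)], whereas [f'' so > 0] pushes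
   [f' (psi s)] below [f' so] by a multiple of [t]. *)

Fixpoint Cn (n : nat) (f : R -> R) : Prop :=
  match n with
  | O => True
  | S n => (forall s, ex_derive f s) /\ Cn n (Derive f)
  end.

Lemma Derive_n_Sn (f : R -> R) n s : Derive_n f (S n) s = Derive_n (Derive f) n s.
Proof.
  revert s; induction n as [|n IH]; intros s; [reflexivity|].
  apply Derive_ext; exact IH.
Qed.

Lemma smooth_Derive_iff f : smooth f <-> (forall s, ex_derive f s) /\ smooth (Derive f).
Proof.
  split.
  - intros Hf; split; [exact (Hf 1%nat)|].
    intros [|n] s; [exact I|].
    apply (ex_derive_ext (Derive_n f (S n))); [apply Derive_n_Sn | exact (Hf (S (S n)) s)].
  - intros [Hd Hs] [|[|n]] s; [exact I | exact (Hd s)|].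
    apply (ex_derive_ext (Derive_n (Derive f) n)); [symmetry; apply Derive_n_Sn|].
    exact (Hs (S n) s).
Qed.

Lemma smooth_Cn f : smooth f <-> forall n, Cn n f.
Proof.
  split.
  - intros Hf n; revert f Hf; induction n as [|n IH]; intros f Hf; [exact I|].
    apply smooth_Derive_iff in Hf as [Hd Hs]; split; [exact Hd | exact (IH _ Hs)].
  - intros Hf n; revert f Hf; induction n as [|n IH]; intros f Hf s; [exact I|].
    destruct n as [|n]; [exact (proj1 (Hf 1%nat) s)|].
    apply (ex_derive_ext (Derive_n (Derive f) n)); [symmetry; apply Derive_n_Sn|].
    apply IH; intros m; exact (proj2 (Hf (S m))).
Qed.

Lemma Cn_ext n f g : (forall t, f t = g t) -> Cn n f -> Cn n g.
Proof.
  revert f g; induction n as [|n IH]; intros f g E Hf; [exact I|].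
  destruct Hf as [Hd Hc]; split.
  - intros s; exact (ex_derive_ext f g s E (Hd s)).
  - apply (IH (Derive f)); [|exact Hc].
    intros t; apply Derive_ext, E.
Qed.

Lemma Cn_S_Cn n f : Cn (S n) f -> Cn n f.
Proof.
  revert f; induction n as [|n IH]; intros f [Hd Hc]; [exact I|].
  split; [exact Hd | exact (IH _ Hc)].
Qed.

Lemma Cn_const n c : Cn n (fun _ => c).
Proof.
  revert c; induction n as [|n IH]; intros c; [exact I|].
  split; [intros s; apply ex_derive_const|].
  apply (Cn_ext n (fun _ => 0)); [intros t; symmetry; apply Derive_const | apply IH].
Qed.

Lemma Cn_id n : Cn n (fun t => t).
Proof.
  destruct n as [|n]; [exact I|].
  split; [intros s; apply ex_derive_id|].
  apply (Cn_ext n (fun _ => 1)); [intros t; symmetry; apply Derive_id | apply Cn_const].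
Qed.

Lemma Cn_plus n f g : Cn n f -> Cn n g -> Cn n (fun t => f t + g t).
Proof.
  revert f g; induction n as [|n IH]; intros f g Hf Hg; [exact I|].
  destruct Hf as [Hf Hf'], Hg as [Hg Hg']; split; [intros s; apply (ex_derive_plus f g); auto|].
  apply (Cn_ext n (fun t => Derive f t + Derive g t)); [|now apply IH].
  intros t; symmetry; apply Derive_plus; auto.
Qed.

Lemma Cn_mult n f g : Cn n f -> Cn n g -> Cn n (fun t => f t * g t).
Proof.
  revert f g; induction n as [|n IH]; intros f g Hf Hg; [exact I|].
  pose proof (Cn_S_Cn _ _ Hf) as Hfn; pose proof (Cn_S_Cn _ _ Hg) as Hgn.
  destruct Hf as [Hf Hf'], Hg as [Hg Hg']; split; [intros s; apply ex_derive_mult; auto|].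
  apply (Cn_ext n (fun t => Derive f t * g t + f t * Derive g t)).
  - intros t; symmetry; apply Derive_mult; auto.
  - apply Cn_plus; apply IH; assumption.
Qed.

Lemma Cn_comp n f g : Cn n f -> Cn n g -> Cn n (fun t => f (g t)).
Proof.
  revert f g; induction n as [|n IH]; intros f g Hf Hg; [exact I|].
  pose proof (Cn_S_Cn _ _ Hg) as Hgn.
  destruct Hf as [Hf Hf'], Hg as [Hg Hg']; split; [intros s; apply ex_derive_comp; auto|].
  apply (Cn_ext n (fun t => Derive f (g t) * Derive g t)).
  - intros t; symmetry; rewrite Derive_comp by auto; ring.
  - apply Cn_mult; [apply IH|]; assumption.
Qed.

Lemma Cn_minus n f g : Cn n f -> Cn n g -> Cn n (fun t => f t - g t).
Proof.
  intros Hf Hg; apply (Cn_ext n (fun t => f t + (-1) * g t)); [intros t; ring|].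
  apply Cn_plus; [exact Hf | apply Cn_mult; [apply Cn_const | exact Hg]].
Qed.

Lemma exp_ge_pow_div_fact u N : 0 <= u -> u ^ N / INR (Factorial.fact N) <= exp u.
Proof.
  intros Hu.
  assert (Hterm : forall k, 0 <= u ^ k / INR (Factorial.fact k)).
  { intros k; apply Rdiv_le_0_compat; [apply pow_le, Hu | apply lt_0_INR, Factorial.lt_O_fact]. }
  destruct N as [|N].
  - pose proof (exp_ineq1_le u); simpl; lra.
  - pose proof (exp_ge_taylor u (S N) Hu) as H; rewrite tech5 in H.
    pose proof (cond_pos_sum _ N Hterm); lra.
Qed.

Lemma exp_neg_inv_le N t : 0 < t -> exp (- / t) <= INR (Factorial.fact N) * t ^ N.
Proof.
  intros Ht; rewrite exp_Ropp.
  assert (HF : 0 < INR (Factorial.fact N)) by apply lt_0_INR, Factorial.lt_O_fact.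
  assert (Hp : 0 < (/ t) ^ N / INR (Factorial.fact N)).
  { apply Rdiv_lt_0_compat; [apply pow_lt, Rinv_0_lt_compat|]; assumption. }
  replace (INR (Factorial.fact N) * t ^ N) with (/ ((/ t) ^ N / INR (Factorial.fact N))).
  - apply Rinv_le_contravar; [exact Hp|]; apply exp_ge_pow_div_fact, Rlt_le, Rinv_0_lt_compat, Ht.
  - rewrite pow_inv; field; split; [apply pow_nonzero |]; lra.
Qed.

Lemma is_derive_zero_of_quadratic_bound (g : R -> R) C :
  g 0 = 0 -> (forall h, Rabs (g h) <= C * h ^ 2) -> is_derive g 0 0.
Proof.
  intros H0 Hg; apply is_derive_Reals; intros eps Heps.
  assert (HC : 0 <= C).
  { specialize (Hg 1); rewrite pow1, Rmult_1_r in Hg; pose proof (Rabs_pos (g 1)); lra. }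
  exists (mkposreal (eps / (C + 1)) (Rdiv_lt_0_compat eps (C + 1) Heps ltac:(lra))); simpl.
  intros h Hh Hhd; rewrite Rplus_0_l, H0, Rminus_0_r, Rminus_0_r.
  assert (Hh0 : 0 < Rabs h) by (apply Rabs_pos_lt, Hh).
  rewrite Rabs_div by exact Hh.
  apply (Rmult_lt_reg_r (Rabs h)); [exact Hh0|].
  unfold Rdiv; rewrite Rmult_assoc, Rinv_l, Rmult_1_r by lra.
  specialize (Hg h); rewrite <- Rsqr_pow2, Rsqr_abs, Rsqr_pow2 in Hg.
  apply (Rmult_lt_compat_r (C + 1)) in Hhd; [|lra].
  unfold Rdiv in Hhd; rewrite Rmult_assoc, Rinv_l, Rmult_1_r in Hhd by lra.
  nra.
Qed.

(* [apply ex_derive_continuous] does not unify with [continuous] goals on [R]. *)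
Lemma ex_derive_continuous_R (g : R -> R) y : ex_derive g y -> continuous g y.
Proof. intros H; exact (ex_derive_continuous g y H). Qed.

Lemma continuous_locally_gt (g : R -> R) y l :
  continuous g y -> l < g y -> locally y (fun z => l < g z).
Proof. intros Hg Hl; exact (Hg _ (open_gt l (g y) Hl)). Qed.

Lemma continuous_locally_lt (g : R -> R) y l :
  continuous g y -> g y < l -> locally y (fun z => g z < l).
Proof. intros Hg Hl; exact (Hg _ (open_lt l (g y) Hl)). Qed.

Lemma locally_at_left so (P : R -> Prop) : locally so P -> at_left so P.
Proof. apply filter_le_within. Qed.

Lemma at_left_lt so : at_left so (fun s => s < so).
Proof. unfold at_left, within; apply filter_forall; intros s Hs; exact Hs. Qed.

Lemma at_left_interval so (P : R -> Prop) :
  at_left so P -> exists delta, 0 < delta /\ forall s, so - delta <= s < so -> P s.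
Proof.
  intros [eps Heps]; pose proof (cond_pos eps).
  exists (eps / 2); split; [lra|].
  intros s Hs; apply Heps; [|lra].
  change (Rabs (s - so) < eps); rewrite Rabs_left; lra.
Qed.

Lemma is_derive_left_slope (g : R -> R) y l m :
  is_derive g y l -> m < l -> at_left y (fun z => m * (y - z) < g y - g z).
Proof.
  intros Hg Hm; apply is_derive_Reals in Hg.
  destruct (Hg (l - m) ltac:(lra)) as [d Hd].
  exists d; intros z Hz Hzy.
  specialize (Hd (z - y) ltac:(lra) Hz); rewrite Rplus_minus in Hd.
  apply Rabs_lt_between in Hd.
  assert (Hq : m < (g z - g y) / (z - y)) by lra.
  apply (Rmult_lt_compat_r (y - z)) in Hq; [|lra].
  replace ((g z - g y) / (z - y) * (y - z)) with (g y - g z) in Hq by (field; lra).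
  lra.
Qed.

Definition flat (k : nat) (t : R) : R := if Rlt_dec 0 t then exp (- / t) / t ^ k else 0.

Lemma flat_pos k t : 0 < t -> flat k t = exp (- / t) / t ^ k.
Proof. intros Ht; unfold flat; destruct (Rlt_dec 0 t); [reflexivity | lra]. Qed.

Lemma flat_nonpos k t : t <= 0 -> flat k t = 0.
Proof. intros Ht; unfold flat; destruct (Rlt_dec 0 t); [lra | reflexivity]. Qed.

Lemma flat_ge0 k t : 0 <= flat k t.
Proof.
  unfold flat; destruct (Rlt_dec 0 t); [|lra].
  apply Rdiv_le_0_compat; [apply Rlt_le, exp_pos | apply pow_lt; lra].
Qed.

Lemma flat_le k t : flat k t <= INR (Factorial.fact (k + 2)) * t ^ 2.
Proof.
  destruct (Rlt_le_dec 0 t) as [Ht|Ht].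
  - rewrite flat_pos by exact Ht.
    assert (Hk : 0 < t ^ k) by (apply pow_lt; exact Ht).
    apply (Rmult_le_reg_r (t ^ k)); [exact Hk|].
    unfold Rdiv; rewrite Rmult_assoc, Rinv_l, Rmult_1_r by lra.
    rewrite Rmult_assoc, <- pow_add, Nat.add_comm; apply exp_neg_inv_le, Ht.
  - rewrite flat_nonpos by exact Ht.
    apply Rmult_le_pos; [apply pos_INR | apply pow2_ge_0].
Qed.

Lemma is_derive_flat k t : is_derive (flat k) t (flat (k + 2) t - INR k * flat (k + 1) t).
Proof.
  destruct (Rtotal_order t 0) as [Ht|[Ht|Ht]].
  - rewrite !flat_nonpos by lra.
    apply (is_derive_ext_loc (fun _ => 0)).
    + apply (filter_imp (fun u => u < 0)); [intros u Hu; rewrite flat_nonpos by lra; reflexivity|].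
      exact (open_lt 0 t Ht).
    + auto_derive; [exact I | ring].
  - subst t; rewrite !flat_nonpos by lra; replace (0 - INR k * 0) with 0 by ring.
    apply (is_derive_zero_of_quadratic_bound _ (INR (Factorial.fact (k + 2))));
      [apply flat_nonpos; lra|].
    intros h; rewrite Rabs_pos_eq by apply flat_ge0; apply flat_le.
  - rewrite !flat_pos by lra.
    apply (is_derive_ext_loc (fun t => exp (- / t) / t ^ k)).
    + apply (filter_imp (fun u => 0 < u)); [intros u Hu; rewrite flat_pos by lra; reflexivity|].
      exact (open_gt 0 t Ht).
    + auto_derive; [repeat split; try lra; apply pow_nonzero; lra|].
      destruct k as [|k]; [simpl; field; lra|].
      cbn [pred]; rewrite !pow_add, S_INR; change (t ^ S k) with (t * t ^ k).
      field; repeat split; try apply pow_nonzero; lra.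
Qed.

Lemma Cn_flat n k : Cn n (flat k).
Proof.
  revert k; induction n as [|n IH]; intros k; [exact I|].
  split; [intros s; eexists; apply is_derive_flat|].
  apply (Cn_ext n (fun t => flat (k + 2) t + (- INR k) * flat (k + 1) t)).
  - intros t; rewrite (is_derive_unique _ _ _ (is_derive_flat k t)); ring.
  - apply Cn_plus; [apply IH | apply Cn_mult; [apply Cn_const | apply IH]].
Qed.

Lemma is_derive_flat_sub k so s :
  is_derive (fun s => flat k (so - s)) s (INR k * flat (k + 1) (so - s) - flat (k + 2) (so - s)).
Proof.
  eapply is_derive_ext; [intros t; reflexivity|].
  replace (INR k * flat (k + 1) (so - s) - flat (k + 2) (so - s))
    with ((-1) * (flat (k + 2) (so - s) - INR k * flat (k + 1) (so - s))) by ring.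
  apply (is_derive_comp (flat k) (fun s => so - s)); [apply is_derive_flat|].
  auto_derive; [exact I | ring].
Qed.

Section Reparametrization.

Variables f psi : R -> R.
Hypotheses (Hf : forall t, ex_derive f t) (Hf' : forall t, ex_derive (Derive f) t)
  (Hpsi : forall t, ex_derive psi t) (Hpsi' : forall t, ex_derive (Derive psi) t).

Lemma Derive_n_comp_2 s :
  Derive_n (fun t => f (psi t)) 2 s =
  Derive_n psi 2 s * Derive f (psi s) + Derive psi s ^ 2 * Derive_n f 2 (psi s).
Proof.
  transitivity (Derive (fun t => Derive psi t * Derive f (psi t)) s).
  { apply Derive_ext; intros t; simpl; rewrite Derive_comp by auto; ring. }
  rewrite Derive_mult; [| exact (Hpsi' s) | apply (ex_derive_comp (Derive f)); auto].
  rewrite (Derive_comp (Derive f)) by auto.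
  change (Derive_n psi 2 s) with (Derive (Derive psi) s).
  change (Derive_n f 2 (psi s)) with (Derive (Derive f) (psi s)).
  ring.
Qed.

Lemma mu_comp x s : f (psi s) <> 0 ->
  mu (fun t => f (psi t)) x s = mu f x (psi s) +
    ((1 - Derive psi s ^ 2) * (Derive f (psi s) ^ 2 + 2 * Derive_n f 2 (psi s) * f (psi s))
     - 2 * Derive f (psi s) * f (psi s) * Derive_n psi 2 s) / f (psi s) ^ 2.
Proof.
  intros Hnz; unfold mu, scal_warped, trK, normK2.
  rewrite Derive_n_comp_2, Derive_comp by auto.
  field; exact Hnz.
Qed.

End Reparametrization.

Definition reparam (so s : R) : R := s - flat 0 (so - s).

Lemma reparam_le so s : reparam so s <= s.
Proof. unfold reparam; pose proof (flat_ge0 0 (so - s)); lra. Qed.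

Lemma reparam_right so s : so <= s -> reparam so s = s.
Proof. intros Hs; unfold reparam; rewrite flat_nonpos by lra; ring. Qed.

Lemma is_derive_reparam so s : is_derive (reparam so) s (1 + flat 2 (so - s)).
Proof.
  unfold reparam.
  replace (1 + flat 2 (so - s)) with (1 - (INR 0 * flat (0 + 1) (so - s) - flat (0 + 2) (so - s)))
    by (simpl; ring).
  apply (is_derive_minus (fun s => s) (fun s => flat 0 (so - s)));
    [exact (is_derive_id s) | apply is_derive_flat_sub].
Qed.

Lemma Derive_reparam so s : Derive (reparam so) s = 1 + flat 2 (so - s).
Proof. apply is_derive_unique, is_derive_reparam. Qed.

Lemma is_derive_Derive_reparam so s :
  is_derive (Derive (reparam so)) s (2 * flat 3 (so - s) - flat 4 (so - s)).
Proof.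
  apply (is_derive_ext (fun s => 1 + flat 2 (so - s))); [intros t; symmetry; apply Derive_reparam|].
  replace (2 * flat 3 (so - s) - flat 4 (so - s))
    with (0 + (INR 2 * flat (2 + 1) (so - s) - flat (2 + 2) (so - s))) by (simpl; ring).
  apply (is_derive_plus (fun _ => 1) (fun s => flat 2 (so - s)));
    [exact (is_derive_const 1 s) | apply is_derive_flat_sub].
Qed.

Lemma Derive_n_reparam_2 so s : Derive_n (reparam so) 2 s = 2 * flat 3 (so - s) - flat 4 (so - s).
Proof. apply is_derive_unique, is_derive_Derive_reparam. Qed.

Lemma smooth_reparam so : smooth (reparam so).
Proof.
  apply smooth_Cn; intros n; unfold reparam.
  apply Cn_minus; [apply Cn_id|].
  apply Cn_comp; [apply Cn_flat | apply Cn_minus; [apply Cn_const | apply Cn_id]].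
Qed.

Lemma reparam_at_left so (P : R -> Prop) : at_left so P -> at_left so (fun s => P (reparam so s)).
Proof.
  intros HP.
  assert (Hc : filterlim (reparam so) (locally so) (locally so)).
  { rewrite <- (reparam_right so so (Rle_refl so)) at 3.
    exact (ex_derive_continuous _ _ (ex_intro _ _ (is_derive_reparam so so))). }
  specialize (Hc (fun y => y < so -> P y) HP); unfold filtermap in Hc.
  unfold at_left, within; revert Hc; apply filter_imp; intros s H Hs.
  apply H; pose proof (reparam_le so s); lra.
Qed.

Definition reparam_gain (f : R -> R) (so s : R) : R :=
  ((1 - (1 + flat 2 (so - s)) ^ 2)
     * (Derive f (reparam so s) ^ 2 + 2 * Derive_n f 2 (reparam so s) * f (reparam so s))
   - 2 * Derive f (reparam so s) * f (reparam so s) * (2 * flat 3 (so - s) - flat 4 (so - s)))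
  / f (reparam so s) ^ 2.

Lemma mu_reparam f x so s : smooth f -> f (reparam so s) <> 0 ->
  mu (fun t => f (reparam so t)) x s = mu f x (reparam so s) + reparam_gain f so s.
Proof.
  intros Hf Hnz.
  assert (Hpsi : forall t, ex_derive (reparam so) t)
    by (intros t; eexists; apply is_derive_reparam).
  assert (Hpsi' : forall t, ex_derive (Derive (reparam so)) t)
    by (intros t; eexists; apply is_derive_Derive_reparam).
  rewrite (mu_comp f (reparam so) (Hf 1%nat) (Hf 2%nat) Hpsi Hpsi' x s Hnz).
  rewrite Derive_reparam, Derive_n_reparam_2; reflexivity.
Qed.

Lemma reparam_gain_numerator_pos t e A F0 F1 M :
  0 < t <= 1 / 4 -> 0 < e <= 2 * t ^ 2 -> Rabs A <= M -> 2 * t * M < F1 * F0 ->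
  0 < (1 - (1 + e / t ^ 2) ^ 2) * A - 2 * F1 * F0 * (2 * (e / t ^ 3) - e / t ^ 4).
Proof.
  intros Ht He HA HP.
  replace ((1 - (1 + e / t ^ 2) ^ 2) * A - 2 * F1 * F0 * (2 * (e / t ^ 3) - e / t ^ 4))
    with (e / t ^ 4 * (2 * F1 * F0 * (1 - 2 * t) - (2 * t ^ 2 + e) * A)) by (field; lra).
  apply Rmult_lt_0_compat; [apply Rdiv_lt_0_compat; [lra | apply pow_lt; lra]|].
  apply Rabs_le_between in HA.
  assert (Hw : 0 < 2 * t ^ 2 + e <= t) by nra.
  assert ((2 * t ^ 2 + e) * A <= t * M) by nra.
  assert (0 <= F1 * F0 * (1 - 4 * t)) by (apply Rmult_le_pos; nra).
  nra.
Qed.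

Section Extension.

Variables (a : R) (f x : R -> R) (tau so : R).
Hypotheses (Hf : smooth f) (Hpos : forall s, a <= s -> 0 < f s)
  (Hmu : forall s, a <= s -> tau <= mu f x s) (Hso : a < so) (Hf1 : 0 < Derive f so).

Let ex_derive_f : forall y, ex_derive f y := Hf 1%nat.
Let ex_derive_Df : forall y, ex_derive (Derive f) y := Hf 2%nat.
Let ex_derive_D2f : forall y, ex_derive (Derive_n f 2) y := Hf 3%nat.

Lemma reparam_good_at_left :
  at_left so (fun s => a < reparam so s /\ tau < mu (fun t => f (reparam so t)) x s).
Proof.
  set (A := fun y => Derive f y ^ 2 + 2 * Derive_n f 2 y * f y).
  set (M := Rabs (A so) + 1); set (b := Derive f so * f so / 2).
  assert (Hb : 0 < b < Derive f so * f so) by (pose proof (Hpos so ltac:(lra)); unfold b; nra).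
  assert (Hy : at_left so (fun y => a < y /\ b < Derive f y * f y /\ Rabs (A y) < M)).
  { apply locally_at_left; repeat apply filter_and.
    - exact (open_gt a so Hso).
    - apply continuous_locally_gt; [|apply Hb].
      apply ex_derive_continuous_R; auto_derive; auto.
    - apply continuous_locally_lt; [|unfold M; lra].
      apply continuous_Rabs_comp, ex_derive_continuous_R; unfold A; auto_derive; auto. }
  assert (Ht : at_left so (fun s => s < so /\ so - s < 1 / 4 /\ 2 * (so - s) * M < b)).
  { apply filter_and; [apply at_left_lt|].
    apply locally_at_left, filter_and; [apply continuous_locally_lt | apply continuous_locally_lt];
      try (apply ex_derive_continuous_R; auto_derive; exact I); nra. }
  generalize (filter_and _ _ (reparam_at_left so _ Hy) Ht); apply filter_imp.
  intros s [[Hay [HP HA]] [Hs [Ht1 Ht2]]]; split; [exact Hay|].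
  assert (Hfy : 0 < f (reparam so s)) by (apply Hpos; lra).
  rewrite mu_reparam by (auto; lra).
  enough (0 < reparam_gain f so s) by (pose proof (Hmu (reparam so s) ltac:(lra)); lra).
  apply Rdiv_lt_0_compat; [|apply pow_lt, Hfy].
  rewrite !flat_pos by lra.
  apply (reparam_gain_numerator_pos _ _ _ _ _ M); [lra | | exact (Rlt_le _ _ HA) | lra].
  split; [apply exp_pos | exact (exp_neg_inv_le 2 (so - s) ltac:(lra))].
Qed.

Lemma mu_reparam_right s : so <= s -> mu (fun t => f (reparam so t)) x s = mu f x s.
Proof.
  intros Hs; assert (Hfs : 0 < f s) by (apply Hpos; lra).
  rewrite mu_reparam by (auto; rewrite reparam_right by exact Hs; lra).
  unfold reparam_gain; rewrite reparam_right, !flat_nonpos by lra.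
  field; lra.
Qed.

Lemma good_extension_reparam delta : 0 < delta ->
  (forall s, so - delta <= s < so ->
     a < reparam so s /\ tau < mu (fun t => f (reparam so t)) x s) ->
  good_extension f x tau so delta (fun t => f (reparam so t)).
Proof.
  intros Hdelta Hleft.
  repeat split; [exact Hdelta | | | | |].
  - apply smooth_Cn; intros n; apply Cn_comp; apply smooth_Cn; [exact Hf | apply smooth_reparam].
  - intros s Hs; destruct (Rlt_le_dec s so) as [Hl|Hr].
    + apply Hpos; pose proof (Hleft s (conj Hs Hl)); lra.
    + rewrite reparam_right by exact Hr; apply Hpos; lra.
  - intros s Hs; rewrite reparam_right by exact Hs; reflexivity.
  - intros s Hs; destruct (Rlt_le_dec s so) as [Hl|Hr].
    + left; apply (Hleft s (conj Hs Hl)).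
    + rewrite mu_reparam_right by exact Hr; apply Hmu; lra.
  - intros s Hs; apply (Hleft s Hs).
Qed.

Lemma reparam_gt_at_left c : c < f so -> at_left so (fun s => c < f (reparam so s)).
Proof.
  intros Hc; apply (reparam_at_left so (fun y => c < f y)), locally_at_left.
  apply continuous_locally_gt; [|exact Hc].
  apply ex_derive_continuous_R, ex_derive_f.
Qed.

Lemma Derive_reparam_lt_at_left : 0 < Derive_n f 2 so ->
  at_left so (fun s => Derive (fun t => f (reparam so t)) s < Derive f so).
Proof.
  intros HL; set (L := Derive_n f 2 so) in *.
  assert (Hy : at_left so (fun y => 0 < Derive f y /\ L / 2 * (so - y) < Derive f so - Derive f y)).
  { apply filter_and.
    - apply locally_at_left, continuous_locally_gt; [|exact Hf1].
      apply ex_derive_continuous_R, ex_derive_Df.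
    - apply (is_derive_left_slope (Derive f) so L); [apply Derive_correct, ex_derive_Df | lra]. }
  assert (Ht : at_left so (fun s => s < so /\ 48 * (so - s) * Derive f so < L)).
  { apply filter_and; [apply at_left_lt|].
    apply locally_at_left, continuous_locally_lt; [|lra].
    apply ex_derive_continuous_R; auto_derive; exact I. }
  generalize (filter_and _ _ (reparam_at_left so _ Hy) Ht); apply filter_imp.
  intros s [[HF1 Hslope] [Hs Hsmall]].
  rewrite Derive_comp, Derive_reparam by (auto; eexists; apply is_derive_reparam).
  pose proof (flat_le 2 (so - s)) as Hq.
  replace (INR (Factorial.fact (2 + 2))) with 24 in Hq by (simpl; ring).
  pose proof (flat_ge0 2 (so - s)); pose proof (reparam_le so s).
  set (q := flat 2 (so - s)) in *; set (y := reparam so s) in *.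
  assert (Ht0 : 0 < so - s <= so - y) by lra; set (t := so - s) in *.
  assert (HqF : q * Derive f y <= 24 * t ^ 2 * Derive f y) by nra.
  assert (HFL : Derive f y < Derive f so) by nra.
  assert (24 * t ^ 2 * Derive f y <= 24 * t ^ 2 * Derive f so) by nra.
  assert (24 * t ^ 2 * Derive f so < L / 2 * t) by nra.
  assert (L / 2 * t <= L / 2 * (so - y)) by nra.
  nra.
Qed.

End Extension.

Theorem lemma4p5 (a : R) (f x : R -> R) (tau : R) :
  0 <= a ->
  smooth f ->
  (forall s, a <= s -> 0 < f s) ->
  C1_pos x ->
  (forall s, a <= s -> tau <= mu f x s) ->
  forall so : R, a < so -> 0 < Derive f so ->
    (exists (delta : R) (ft : R -> R), good_extension f x tau so delta ft) /\
    (forall c : R, 0 < c -> c < f so -> 0 < Derive_n f 2 so ->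
       exists (delta : R) (ft : R -> R), good_extension f x tau so delta ft /\
         c < ft (so - delta) /\ Derive ft (so - delta) < Derive f so).
Proof.
  intros _ Hf Hpos _ Hmu so Hso Hf1.
  pose proof (reparam_good_at_left a f x tau so Hf Hpos Hmu Hso Hf1) as Hnear.
  split.
  - destruct (at_left_interval so _ Hnear) as [delta [Hdelta Hgood]].
    exists delta, (fun t => f (reparam so t)).
    exact (good_extension_reparam a f x tau so Hf Hpos Hmu Hso delta Hdelta Hgood).
  - intros c _ Hc Hf2.
    pose proof (filter_and _ _ Hnear (filter_and _ _ (reparam_gt_at_left f so Hf c Hc)
      (Derive_reparam_lt_at_left f so Hf Hf1 Hf2))) as Hall.
    destruct (at_left_interval so _ Hall) as [delta [Hdelta Hgood]].
    exists delta, (fun t => f (reparam so t)); split; [|split].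
    + apply (good_extension_reparam a f x tau so Hf Hpos Hmu Hso delta Hdelta).
      intros s Hs; apply (Hgood s Hs).
    + apply (Hgood (so - delta)); lra.
    + apply (Hgood (so - delta)); lra.
Qed.
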